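(* For every $\alpha>-1$ and every $z>0$, $$|I_\alpha(z)-I_{\alpha+1}(z)|<(4\alpha+6)\frac{I_{\alpha+1}(z)}{z}.$$
   Context: $I_\alpha(z)=\sum_{k=0}^\infty\frac{(z/2)^{\alpha+2k}}{k!\,\Gamma(\alpha+k+1)}$ is the modified Bessel function of the first kind of order $\alpha>-1$. *)

From Stdlib Require Import Reals Arith Factorial.
From Coquelicot Require Import Coquelicot.
Open Scope R_scope.

Definition Gamma (s : R) : R :=
  RInt_gen (fun t => Rpower t (s - 1) * exp (- t))
           (at_right 0) (Rbar_locally p_infty).

Definition BesselI (alpha z : R) : R :=
  Series (fun k : nat =>
    Rpower (z / 2) (alpha + 2 * INR k) / (INR (fact k) * Gamma (alpha + INR k + 1))).

(* Write T = I_{a+1}(z)/z. The recurrence I_mu = I_{mu+2} + (2(mu+1)/z) I_{mu+1} gives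
   I_a - I_{a+1} = (I_{a+2} - I_{a+1}) + 2(a+1) T, and one order higher, together with
   I_{a+3} < I_{a+2} < I_{a+1}, it gives I_{a+1} - I_{a+2} < 2(a+2) T. So I_a - I_{a+1}
   lies strictly between -2T and 2(a+1)T.
   Both the recurrence and the monotonicity I_{nu+1} < I_nu (nu >= 0) are read off the
   series (z/2)^mu sum_k c_mu(k) (z/2)^(2k) with c_mu(k) = 1/(k! Gamma(mu+k+1)): the
   recurrence from Gamma(s+1) = s Gamma(s), and the monotonicity from the Turan-type bound
   c_{nu+1}(k) c_{nu+1}(l) <= (c_nu(k+1) c_nu(l) + c_nu(k) c_nu(l+1)) / 2,
   which, summed along Cauchy products, gives (z/2)^2 S_{nu+1}^2 < S_nu^2.
   The Gamma integral converges by the bounds t^(s-1) near 0 and C e^(-t/2) near +oo, and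
   Gamma(s+1) = s Gamma(s) is an integration by parts. *)

From Stdlib Require Import Reals Lra Lia Factorial.
From Coquelicot Require Import Coquelicot.
Open Scope R_scope.

(** * Improper integrals over (0, +oo) *)

Notation at_0_infty := (filter_prod (at_right 0) (Rbar_locally p_infty)).

Lemma at_0_infty_box (P Q : R -> Prop) :
  at_right 0 P -> Rbar_locally p_infty Q ->
  at_0_infty (fun ab => P (fst ab) /\ Q (snd ab)).
Proof. intros HP HQ. apply (Filter_prod _ _ _ P Q HP HQ). now intros. Qed.

Lemma at_right_0_pos : at_right 0 (fun t => 0 < t).
Proof. exists (mkposreal 1 Rlt_0_1). now intros. Qed.

Lemma at_right_0_le1 : at_right 0 (fun t => t <= 1).
Proof.
  exists (mkposreal 1 Rlt_0_1). intros t Ht _.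
  change (Rabs (t - 0) < 1) in Ht. apply Rabs_def2 in Ht. lra.
Qed.

Lemma at_infty_ge1 : Rbar_locally p_infty (fun t => 1 <= t).
Proof. exists 1. intros; lra. Qed.

Lemma at_0_infty_between_pos :
  at_0_infty (fun ab => forall x, Rmin (fst ab) (snd ab) <= x <= Rmax (fst ab) (snd ab) -> 0 < x).
Proof.
  generalize (at_0_infty_box _ _ at_right_0_pos at_infty_ge1). apply filter_imp.
  intros [a b] [Ha Hb] x Hx. simpl in *.
  assert (0 < Rmin a b) by (apply Rmin_glb_lt; lra). lra.
Qed.

Lemma filterlim_Rmult_l_0 {T} (F : (T -> Prop) -> Prop) (f : T -> R) (c : R) :
  filterlim f F (locally 0) -> filterlim (fun x => c * f x) F (locally 0).
Proof.
  intros Hf. eapply filterlim_comp; [exact Hf|].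
  pose proof (filterlim_Rbar_mult_l c 0) as Hc. simpl in Hc.
  now rewrite Rmult_0_r in Hc.
Qed.

Lemma filterlim_0_eventually_small {T} {F : (T -> Prop) -> Prop} {FF : Filter F}
  (g : T -> R) (e : R) :
  filterlim g F (locally 0) -> 0 < e -> F (fun x => Rabs (g x) < e).
Proof.
  intros Hg He. generalize (proj1 (filterlim_locally g 0) Hg (mkposreal e He)).
  apply filter_imp. intros x Hx. change (Rabs (g x - 0) < e) in Hx. now rewrite Rminus_0_r in Hx.
Qed.

Lemma Rpower_at_right_0 s : 0 < s -> filterlim (fun t => Rpower t s) (at_right 0) (locally 0).
Proof.
  intros Hs. apply filterlim_locally. intros eps.
  exists (mkposreal (Rpower eps (/ s)) (exp_pos _)). intros t Ht Ht0.
  change (Rabs (t - 0) < Rpower eps (/ s)) in Ht. apply Rabs_def2 in Ht.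
  change (Rabs (Rpower t s - 0) < eps).
  rewrite Rminus_0_r, Rabs_right by (left; apply exp_pos).
  replace (pos eps) with (Rpower (Rpower eps (/ s)) s)
    by (rewrite Rpower_mult, Rinv_l, Rpower_1; [easy | apply cond_pos | lra]).
  apply Rlt_Rpower_l; lra.
Qed.

Lemma exp_neg_half_at_infty :
  filterlim (fun t => exp (- t / 2)) (Rbar_locally p_infty) (locally 0).
Proof.
  apply filterlim_locally. intros eps. exists (-2 * ln eps). intros t Ht.
  change (Rabs (exp (- t / 2) - 0) < eps).
  rewrite Rminus_0_r, Rabs_right by (left; apply exp_pos).
  rewrite <- (exp_ln eps) by apply cond_pos. apply exp_increasing. lra.
Qed.

Lemma RInt_le_of_derivative (f F dF : R -> R) (a b : R) :
  a <= b -> ex_RInt f a b ->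
  (forall t, a <= t <= b -> is_derive F t (dF t)) ->
  (forall t, a <= t <= b -> continuous dF t) ->
  (forall t, a < t < b -> f t <= dF t) ->
  RInt f a b <= F b - F a.
Proof.
  intros Hab Hf HF HdF Hle.
  assert (HI : is_RInt dF a b (minus (F b) (F a))).
  { apply (is_RInt_derive (V := R_CompleteNormedModule)); intros t Ht;
      rewrite Rmin_left, Rmax_right in Ht by lra; auto. }
  replace (F b - F a) with (RInt dF a b)
    by (apply (is_RInt_unique (V := R_CompleteNormedModule)); exact HI).
  apply RInt_le; auto. now exists (minus (F b) (F a)).
Qed.

Section Improper_integral_0_infty.

Variable f : R -> R.
Hypothesis f_cont : forall t, 0 < t -> continuous f t.
Hypothesis f_ge0 : forall t, 0 < t -> 0 <= f t.

Lemma ex_RInt_0_infty a b : 0 < a -> 0 < b -> ex_RInt f a b.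
Proof.
  intros Ha Hb. apply (ex_RInt_continuous (V := R_CompleteNormedModule)).
  intros t Ht. apply f_cont.
  assert (0 < Rmin a b) by (apply Rmin_glb_lt; lra). lra.
Qed.

Lemma RInt_Chasles_0_infty a b c : 0 < a -> 0 < b -> 0 < c ->
  RInt f a b + RInt f b c = RInt f a c.
Proof. intros. apply (RInt_Chasles (V := R_CompleteNormedModule)); apply ex_RInt_0_infty; auto. Qed.

Lemma RInt_ge0_0_infty a b : 0 < a <= b -> 0 <= RInt f a b.
Proof.
  intros Hab. apply RInt_ge_0; [lra | apply ex_RInt_0_infty; lra | intros; apply f_ge0; lra].
Qed.

Lemma Rabs_RInt_lt_0_infty (P : R -> Prop) (e : R) :
  (forall t, P t -> 0 < t) ->
  (forall a b, P a -> P b -> a <= b -> RInt f a b < e) ->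
  forall a b, P a -> P b -> Rabs (RInt f a b) < e.
Proof.
  intros Hpos He a b Ha Hb.
  destruct (Rle_lt_dec a b) as [Hab | Hba].
  - pose proof (RInt_ge0_0_infty a b ltac:(split; auto)).
    rewrite Rabs_right by lra. auto.
  - rewrite <- opp_RInt_swap by (apply ex_RInt_0_infty; auto).
    pose proof (RInt_ge0_0_infty b a ltac:(split; [auto | lra])).
    change (Rabs (- RInt f b a) < e). rewrite Rabs_Ropp, Rabs_right by lra.
    apply He; auto; lra.
Qed.

Lemma RInt_lim_0_infty (h0 hinf : R -> R) :
  (forall a b, 0 < a -> a <= b <= 1 -> RInt f a b <= h0 b) ->
  (forall a b, 1 <= a <= b -> RInt f a b <= hinf a) ->
  filterlim h0 (at_right 0) (locally 0) ->
  filterlim hinf (Rbar_locally p_infty) (locally 0) ->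
  exists l, filterlim (fun ab => RInt f (fst ab) (snd ab)) at_0_infty (locally l).
Proof.
  intros H0 Hinf Hlim0 Hliminf.
  apply (filterlim_locally_cauchy (U := R_CompleteSpace)). intros eps.
  set (e := eps / 2). assert (He : 0 < e) by (unfold e; destruct eps; simpl; lra).
  set (P0 := fun a => 0 < a /\ a <= 1 /\ Rabs (h0 a) < e).
  set (Pinf := fun b => 1 <= b /\ Rabs (hinf b) < e).
  assert (HP0 : forall a b, P0 a -> P0 b -> Rabs (RInt f a b) < e).
  { apply Rabs_RInt_lt_0_infty; [now intros t [] |].
    intros a b (Ha & _ & _) (Hb & Hb1 & Hhb) Hab.
    pose proof (H0 a b Ha ltac:(lra)). apply Rabs_def2 in Hhb. lra. }
  assert (HPinf : forall a b, Pinf a -> Pinf b -> Rabs (RInt f a b) < e).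
  { apply Rabs_RInt_lt_0_infty; [intros t []; lra |].
    intros a b (Ha & Hha) (Hb & _) Hab.
    pose proof (Hinf a b ltac:(lra)). apply Rabs_def2 in Hha. lra. }
  exists (fun ab => P0 (fst ab) /\ Pinf (snd ab)). split.
  - apply at_0_infty_box.
    + apply filter_and; [apply at_right_0_pos | apply filter_and; [apply at_right_0_le1 |]].
      now apply filterlim_0_eventually_small.
    + apply filter_and; [apply at_infty_ge1 |].
      now apply filterlim_0_eventually_small.
  - intros [a b] [a' b'] [Ha Hb] [Ha' Hb']. simpl in *.
    change (Rabs (RInt f a' b' - RInt f a b) < eps).
    assert (0 < a /\ 0 < a' /\ 0 < b /\ 0 < b') by (destruct Ha, Ha', Hb, Hb'; lra).
    rewrite <- (RInt_Chasles_0_infty a' a b'), <- (RInt_Chasles_0_infty a b b') by lra.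
    replace (RInt f a' a + (RInt f a b + RInt f b b') - RInt f a b)
      with (RInt f a' a + RInt f b b') by ring.
    eapply Rle_lt_trans; [apply Rabs_triang |].
    pose proof (HP0 a' a Ha' Ha). pose proof (HPinf b b' Hb Hb').
    unfold e in *. lra.
Qed.

Lemma is_RInt_gen_0_infty_of_lim (l : R) :
  filterlim (fun ab => RInt f (fst ab) (snd ab)) at_0_infty (locally l) ->
  is_RInt_gen f (at_right 0) (Rbar_locally p_infty) l.
Proof.
  apply filterlimi_lim_ext_loc.
  generalize (at_0_infty_box _ _ at_right_0_pos at_infty_ge1).
  apply filter_imp. intros [a b] [Ha Hb].
  apply (RInt_correct (V := R_CompleteNormedModule)), ex_RInt_0_infty; simpl in *; lra.
Qed.

End Improper_integral_0_infty.

(** * The Gamma function *)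

Lemma exp_le_compat x y : x <= y -> exp x <= exp y.
Proof. intros [Hxy | ->]; [left; now apply exp_increasing | apply Rle_refl]. Qed.

Lemma Rpower_sub1 t s : 0 < t -> Rpower t (s - 1) = Rpower t s / t.
Proof.
  intros Ht. unfold Rminus. rewrite Rpower_plus, Rpower_Ropp, Rpower_1 by exact Ht.
  reflexivity.
Qed.

Definition gamma_integrand (s t : R) : R := Rpower t (s - 1) * exp (- t).

Lemma gamma_integrand_pos s t : 0 < gamma_integrand s t.
Proof. apply Rmult_lt_0_compat; apply exp_pos. Qed.

Lemma gamma_integrand_ge0 s t : 0 < t -> 0 <= gamma_integrand s t.
Proof. intros _. left; apply gamma_integrand_pos. Qed.

Lemma gamma_integrand_continuous s t : 0 < t -> continuous (gamma_integrand s) t.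
Proof.
  intros Ht. apply (ex_derive_continuous (V := R_NormedModule)).
  unfold gamma_integrand, Rpower. auto_derive. lra.
Qed.

Lemma is_derive_gamma_integrand s t : 0 < t ->
  is_derive (gamma_integrand (s + 1)) t (s * gamma_integrand s t - gamma_integrand (s + 1) t).
Proof.
  intros Ht. unfold gamma_integrand.
  replace (s + 1 - 1) with s by ring. rewrite (Rpower_sub1 t s Ht).
  unfold Rpower. auto_derive; [lra | field; lra].
Qed.

Lemma gamma_integrand_le_Rpower s t : 0 <= t -> gamma_integrand s t <= Rpower t (s - 1).
Proof.
  intros Ht. unfold gamma_integrand.
  rewrite <- (Rmult_1_r (Rpower t (s - 1))) at 2.
  apply Rmult_le_compat_l; [left; apply exp_pos |].
  rewrite <- exp_0. apply exp_le_compat. lra.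
Qed.

Lemma gamma_integrand_le_exp s :
  exists C, 0 < C /\ forall t, 1 <= t -> gamma_integrand s t <= C * exp (- t / 2).
Proof.
  (* [C = K^A], because [ln t <= ln K + t/K - 1] and [A/K <= 1/2]. *)
  set (A := Rabs (s - 1)). set (K := 2 * A + 2).
  assert (HA : 0 <= A) by apply Rabs_pos.
  assert (HK : 0 < K) by (unfold K; lra).
  exists (Rpower K A). split; [apply exp_pos |]. intros t Ht.
  unfold gamma_integrand, Rpower. rewrite <- !exp_plus. apply exp_le_compat.
  assert (Hln : ln t <= ln K + (t / K - 1)).
  { replace (ln t) with (ln K + ln (t / K))
      by (rewrite <- ln_mult by (try apply Rdiv_lt_0_compat; lra); f_equal; field; lra).
    pose proof (exp_ineq1_le (ln (t / K))) as Hexp.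
    rewrite exp_ln in Hexp by (apply Rdiv_lt_0_compat; lra). lra. }
  assert (Hln0 : 0 <= ln t) by (rewrite <- ln_1; apply ln_le; lra).
  assert (Hs : (s - 1) * ln t <= A * ln t)
    by (apply Rmult_le_compat_r; [exact Hln0 | apply Rle_abs]).
  assert (HAK : A * (t / K) <= t / 2).
  { replace (A * (t / K)) with (t / 2 - t / K) by (unfold K; field; lra).
    assert (0 < t / K) by (apply Rdiv_lt_0_compat; lra). lra. }
  nra.
Qed.

Lemma RInt_gamma_integrand_le_Rpower s a b : 0 < s -> 0 < a -> a <= b ->
  RInt (gamma_integrand s) a b <= / s * Rpower b s.
Proof.
  intros Hs Ha Hab.
  apply Rle_trans with (/ s * Rpower b s - / s * Rpower a s).
  - apply (RInt_le_of_derivative _ (fun t => / s * Rpower t s)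
             (fun t => Rpower t (s - 1))); auto.
    + apply ex_RInt_0_infty; [apply gamma_integrand_continuous | lra | lra].
    + intros t Ht. rewrite (Rpower_sub1 t s) by lra.
      unfold Rpower. auto_derive; [lra | field; split; lra].
    + intros t Ht. apply (ex_derive_continuous (V := R_NormedModule)).
      unfold Rpower. auto_derive. lra.
    + intros t Ht. apply gamma_integrand_le_Rpower. lra.
  - assert (0 < / s * Rpower a s)
      by (apply Rmult_lt_0_compat; [apply Rinv_0_lt_compat, Hs | apply exp_pos]).
    lra.
Qed.

Lemma RInt_gamma_integrand_le_exp s C a b :
  (forall t, 1 <= t -> gamma_integrand s t <= C * exp (- t / 2)) -> 0 < C ->
  1 <= a -> a <= b -> RInt (gamma_integrand s) a b <= 2 * C * exp (- a / 2).
Proof.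
  intros HC HC0 Ha Hab.
  apply Rle_trans with (- 2 * C * exp (- b / 2) - - 2 * C * exp (- a / 2)).
  - apply (RInt_le_of_derivative _ (fun t => - 2 * C * exp (- t / 2))
             (fun t => C * exp (- t / 2))); auto.
    + apply ex_RInt_0_infty; [apply gamma_integrand_continuous | lra | lra].
    + intros t _. auto_derive; [easy | unfold Rdiv; field].
    + intros t _. apply (ex_derive_continuous (V := R_NormedModule)). auto_derive. easy.
    + intros t Ht. apply HC. lra.
  - assert (0 < C * exp (- b / 2)) by (apply Rmult_lt_0_compat; [exact HC0 | apply exp_pos]).
    lra.
Qed.

Lemma gamma_integrand_at_right_0 s : 0 < s ->
  filterlim (gamma_integrand (s + 1)) (at_right 0) (locally 0).
Proof.
  intros Hs. apply (filterlim_le_le (fun _ => 0) _ (fun t => Rpower t s) (Finite 0)).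
  - generalize at_right_0_pos. apply filter_imp. intros t Ht. split.
    + left; apply gamma_integrand_pos.
    + replace s with (s + 1 - 1) at 2 by ring. apply gamma_integrand_le_Rpower. lra.
  - apply filterlim_const.
  - now apply Rpower_at_right_0.
Qed.

Lemma gamma_integrand_at_infty s :
  filterlim (gamma_integrand s) (Rbar_locally p_infty) (locally 0).
Proof.
  destruct (gamma_integrand_le_exp s) as (C & HC0 & HC).
  apply (filterlim_le_le (fun _ => 0) _ (fun t => C * exp (- t / 2)) (Finite 0)).
  - generalize at_infty_ge1. apply filter_imp. intros t Ht. split.
    + left; apply gamma_integrand_pos.
    + now apply HC.
  - apply filterlim_const.
  - apply filterlim_Rmult_l_0, exp_neg_half_at_infty.
Qed.

Lemma Gamma_lim s : 0 < s ->
  filterlim (fun ab => RInt (gamma_integrand s) (fst ab) (snd ab)) at_0_infty (locally (Gamma s)).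
Proof.
  intros Hs. destruct (gamma_integrand_le_exp s) as (C & HC0 & HC).
  destruct (RInt_lim_0_infty (gamma_integrand s) (gamma_integrand_continuous s)
              (gamma_integrand_ge0 s) (fun b => / s * Rpower b s) (fun a => 2 * C * exp (- a / 2)))
    as [l Hl].
  - intros a b Ha Hab. apply RInt_gamma_integrand_le_Rpower; lra.
  - intros a b Hab. apply RInt_gamma_integrand_le_exp; auto; lra.
  - apply filterlim_Rmult_l_0. now apply Rpower_at_right_0.
  - apply filterlim_Rmult_l_0. apply exp_neg_half_at_infty.
  - replace (Gamma s) with l; [exact Hl |].
    change (l = RInt_gen (gamma_integrand s) (at_right 0) (Rbar_locally p_infty)).
    symmetry. apply (is_RInt_gen_unique (V := R_CompleteNormedModule)).
    now apply is_RInt_gen_0_infty_of_lim; [apply gamma_integrand_continuous |].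
Qed.

Lemma is_RInt_gen_Gamma s : 0 < s ->
  is_RInt_gen (gamma_integrand s) (at_right 0) (Rbar_locally p_infty) (Gamma s).
Proof.
  intros Hs. apply is_RInt_gen_0_infty_of_lim;
    [apply gamma_integrand_continuous | now apply Gamma_lim].
Qed.

Lemma Gamma_pos s : 0 < s -> 0 < Gamma s.
Proof.
  intros Hs.
  assert (H12 : 0 < RInt (gamma_integrand s) 1 2).
  { apply RInt_gt_0; [lra | intros; apply gamma_integrand_pos |].
    intros t Ht. apply gamma_integrand_continuous. lra. }
  apply Rlt_le_trans with (1 := H12).
  apply (filterlim_le (F := at_0_infty) (fun _ => RInt (gamma_integrand s) 1 2)
           (fun ab => RInt (gamma_integrand s) (fst ab) (snd ab))
           (Finite (RInt (gamma_integrand s) 1 2)) (Finite (Gamma s)));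
    [| apply filterlim_const | now apply Gamma_lim].
  assert (Hb : Rbar_locally p_infty (fun t => 2 <= t)) by (exists 2; intros; lra).
  generalize (at_0_infty_box _ _ (filter_and _ _ at_right_0_pos at_right_0_le1) Hb).
  apply filter_imp. intros [a b] [[Ha Ha1] Hb2]. simpl in *.
  rewrite <- (RInt_Chasles_0_infty _ (gamma_integrand_continuous s) a 1 b),
    <- (RInt_Chasles_0_infty _ (gamma_integrand_continuous s) 1 2 b) by lra.
  pose proof (RInt_ge0_0_infty _ (gamma_integrand_continuous s) (gamma_integrand_ge0 s) a 1).
  pose proof (RInt_ge0_0_infty _ (gamma_integrand_continuous s) (gamma_integrand_ge0 s) 2 b).
  lra.
Qed.

Lemma Derive_gamma_integrand s t : 0 < t ->
  Derive (gamma_integrand (s + 1)) t = s * gamma_integrand s t - gamma_integrand (s + 1) t.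
Proof. intros Ht. now apply is_derive_unique, is_derive_gamma_integrand. Qed.

Lemma is_RInt_gen_gamma_integrand_parts s : 0 < s ->
  is_RInt_gen (fun t => s * gamma_integrand s t - gamma_integrand (s + 1) t)
    (at_right 0) (Rbar_locally p_infty) 0.
Proof.
  intros Hs.
  assert (Hparts : is_RInt_gen (Derive (gamma_integrand (s + 1)))
                     (at_right 0) (Rbar_locally p_infty) (0 - 0)).
  { apply is_RInt_gen_Derive.
    - generalize at_0_infty_between_pos. apply filter_imp. intros ab H x Hx.
      eexists. now apply is_derive_gamma_integrand, H.
    - generalize at_0_infty_between_pos. apply filter_imp. intros ab H x Hx.
      specialize (H x Hx).
      apply (continuous_ext_loc _ (fun y => s * gamma_integrand s y - gamma_integrand (s + 1) y)).
      + generalize (open_gt 0 x H). apply filter_imp. intros y Hy.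
        symmetry. now apply Derive_gamma_integrand.
      + apply (ex_derive_continuous (V := R_NormedModule)).
        unfold gamma_integrand, Rpower. auto_derive. lra.
    - now apply gamma_integrand_at_right_0.
    - apply gamma_integrand_at_infty. }
  rewrite Rminus_0_r in Hparts. revert Hparts. apply is_RInt_gen_ext.
  generalize at_0_infty_between_pos. apply filter_imp. intros ab H x Hx.
  apply Derive_gamma_integrand, H. lra.
Qed.

Lemma Gamma_succ s : 0 < s -> Gamma (s + 1) = s * Gamma s.
Proof.
  intros Hs.
  pose proof (is_RInt_gen_minus _ _ _ _ (is_RInt_gen_scal _ s _ (is_RInt_gen_Gamma s Hs))
                (is_RInt_gen_gamma_integrand_parts s Hs)) as Hsucc.
  apply (is_RInt_gen_ext _ (gamma_integrand (s + 1))) in Hsucc.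
  2:{ apply filter_forall. intros ab x _.
      unfold minus, plus, opp, scal; simpl. unfold mult; simpl. ring. }
  change (RInt_gen (gamma_integrand (s + 1)) (at_right 0) (Rbar_locally p_infty) = s * Gamma s).
  rewrite (is_RInt_gen_unique (V := R_CompleteNormedModule) _ _ Hsucc).
  unfold minus, plus, opp, scal; simpl. unfold mult; simpl. ring.
Qed.

(** * The power series of [BesselI] *)

Definition bessel_coef (mu : R) (k : nat) : R := / (INR (fact k) * Gamma (mu + INR k + 1)).

Lemma Gamma_index_pos mu k : -1 < mu -> 0 < Gamma (mu + INR k + 1).
Proof. intros Hmu. apply Gamma_pos. pose proof (pos_INR k). lra. Qed.

Lemma bessel_coef_pos mu k : -1 < mu -> 0 < bessel_coef mu k.
Proof.
  intros Hmu. apply Rinv_0_lt_compat, Rmult_lt_0_compat.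
  - apply lt_0_INR, lt_O_fact.
  - now apply Gamma_index_pos.
Qed.

Lemma bessel_coef_succ mu k : -1 < mu ->
  bessel_coef mu (S k) = bessel_coef mu k / ((INR k + 1) * (mu + INR k + 1)).
Proof.
  intros Hmu. pose proof (pos_INR k). pose proof (Gamma_index_pos mu k Hmu).
  pose proof (INR_fact_neq_0 k).
  unfold bessel_coef. rewrite fact_simpl, mult_INR, S_INR.
  replace (mu + (INR k + 1) + 1) with ((mu + INR k + 1) + 1) by ring.
  rewrite Gamma_succ by lra. field. repeat split; lra.
Qed.

Lemma bessel_coef_shift mu k : -1 < mu ->
  bessel_coef (mu + 1) k = bessel_coef mu k / (mu + INR k + 1).
Proof.
  intros Hmu. pose proof (pos_INR k). pose proof (Gamma_index_pos mu k Hmu).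
  pose proof (INR_fact_neq_0 k).
  unfold bessel_coef.
  replace (mu + 1 + INR k + 1) with ((mu + INR k + 1) + 1) by ring.
  rewrite Gamma_succ by lra. field. repeat split; lra.
Qed.

Lemma bessel_coef_rec mu k : -1 < mu ->
  bessel_coef mu (S k) = (mu + 1) * bessel_coef (mu + 1) (S k) + bessel_coef (mu + 2) k.
Proof.
  intros Hmu. pose proof (pos_INR k). pose proof (bessel_coef_pos mu k Hmu).
  replace (mu + 2) with ((mu + 1) + 1) by ring.
  rewrite !bessel_coef_shift, !bessel_coef_succ, S_INR by lra.
  field. repeat split; lra.
Qed.

Definition bessel_term (mu y : R) (k : nat) : R := bessel_coef mu k * y ^ k.
Definition bessel_series (mu y : R) : R := Series (bessel_term mu y).

Lemma bessel_term_pos mu y k : -1 < mu -> 0 < y -> 0 < bessel_term mu y k.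
Proof. intros. apply Rmult_lt_0_compat; [now apply bessel_coef_pos | now apply pow_lt]. Qed.

Lemma ex_series_bessel mu y : -1 < mu -> 0 < y -> ex_series (bessel_term mu y).
Proof.
  intros Hmu Hy. apply ex_series_Rabs, (ex_series_DAlembert _ 0); [lra | |].
  { intros n. apply Rgt_not_eq, bessel_term_pos; auto. }
  apply (is_lim_seq_le_le (fun _ => 0) _ (fun n => y / (mu + 1) * / INR (S n))).
  - intros n. pose proof (pos_INR n).
    pose proof (bessel_coef_pos mu n Hmu). pose proof (pow_lt y n Hy).
    unfold bessel_term. rewrite bessel_coef_succ by lra.
    replace (bessel_coef mu n / ((INR n + 1) * (mu + INR n + 1)) * y ^ S n
             / (bessel_coef mu n * y ^ n))
      with (y / ((INR n + 1) * (mu + INR n + 1))) by (simpl; field; repeat split; lra).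
    assert (Hden : 0 < (INR n + 1) * (mu + INR n + 1)) by (apply Rmult_lt_0_compat; lra).
    rewrite Rabs_right by (left; now apply Rdiv_lt_0_compat).
    split; [left; now apply Rdiv_lt_0_compat |].
    rewrite S_INR. unfold Rdiv. rewrite Rmult_assoc, <- Rinv_mult.
    apply Rmult_le_compat_l; [lra |]. apply Rinv_le_contravar; [nra | nra].
  - apply is_lim_seq_const.
  - replace (Finite 0) with (Rbar_mult (y / (mu + 1)) 0) by (simpl; f_equal; ring).
    apply is_lim_seq_scal_l. replace (Finite 0) with (Rbar_inv p_infty) by reflexivity.
    apply is_lim_seq_inv; [| discriminate].
    apply (is_lim_seq_incr_1 INR), is_lim_seq_INR.
Qed.

Lemma bessel_series_pos mu y : -1 < mu -> 0 < y -> 0 < bessel_series mu y.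
Proof.
  intros Hmu Hy. unfold bessel_series.
  rewrite Series_incr_1 by now apply ex_series_bessel.
  assert (0 <= Series (fun k => bessel_term mu y (S k))).
  { apply Rle_trans with (Series (fun _ => 0 * 0)); [rewrite Series_scal_l; lra |].
    apply Series_le.
    - intros n. split; [lra | rewrite Rmult_0_l; left; now apply bessel_term_pos].
    - apply (ex_series_incr_1 (bessel_term mu y)). now apply ex_series_bessel. }
  pose proof (bessel_term_pos mu y 0 Hmu Hy). lra.
Qed.

Lemma BesselI_bessel_series mu z : -1 < mu -> 0 < z ->
  BesselI mu z = Rpower (z / 2) mu * bessel_series mu ((z / 2) ^ 2).
Proof.
  intros Hmu Hz. unfold BesselI, bessel_series.
  rewrite <- Series_scal_l. apply Series_ext. intros k.
  unfold bessel_term, bessel_coef.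
  rewrite Rpower_plus, <- pow_mult.
  replace (2 * INR k) with (INR (2 * k)) by (rewrite mult_INR; simpl; ring).
  rewrite Rpower_pow by lra.
  pose proof (INR_fact_neq_0 k). pose proof (Gamma_index_pos mu k Hmu).
  field. split; lra.
Qed.

Lemma bessel_series_rec mu y : -1 < mu -> 0 < y ->
  bessel_series mu y = (mu + 1) * bessel_series (mu + 1) y + y * bessel_series (mu + 2) y.
Proof.
  intros Hmu Hy. unfold bessel_series.
  rewrite (Series_incr_1 (bessel_term mu y)), (Series_incr_1 (bessel_term (mu + 1) y))
    by (apply ex_series_bessel; lra).
  rewrite (Series_ext (fun k => bessel_term mu y (S k))
             (fun k => (mu + 1) * bessel_term (mu + 1) y (S k) + y * bessel_term (mu + 2) y k))
    by (intros k; unfold bessel_term; rewrite bessel_coef_rec by lra; simpl; ring).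
  rewrite Series_plus, !Series_scal_l.
  - unfold bessel_term. rewrite (bessel_coef_shift mu 0) by lra. simpl. field. lra.
  - apply (ex_series_scal_l (V := R_NormedModule)).
    apply (ex_series_incr_1 (bessel_term (mu + 1) y)), ex_series_bessel; lra.
  - apply (ex_series_scal_l (V := R_NormedModule)), ex_series_bessel; lra.
Qed.

Lemma BesselI_rec mu z : -1 < mu -> 0 < z ->
  BesselI mu z = BesselI (mu + 2) z + 2 * (mu + 1) / z * BesselI (mu + 1) z.
Proof.
  intros Hmu Hz. rewrite !BesselI_bessel_series by lra.
  rewrite (bessel_series_rec mu) by (try apply pow_lt; lra).
  rewrite !Rpower_plus, Rpower_1 by lra.
  replace (Rpower (z / 2) 2) with ((z / 2) ^ 2)
    by (rewrite <- Rpower_pow by lra; simpl; f_equal; ring).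
  field. lra.
Qed.

Lemma BesselI_pos mu z : -1 < mu -> 0 < z -> 0 < BesselI mu z.
Proof.
  intros Hmu Hz. rewrite BesselI_bessel_series by auto.
  apply Rmult_lt_0_compat; [apply exp_pos | apply bessel_series_pos; [auto | apply pow_lt; lra]].
Qed.

(** * Monotonicity in the order *)

Lemma inv_mul_le_half_sum nu K L : 0 <= nu -> 0 < K -> 0 < L ->
  / ((nu + K) * (nu + L)) <= (/ (K * (nu + K)) + / (L * (nu + L))) / 2.
Proof.
  intros Hnu HK HL.
  assert (Hgap : (/ (K * (nu + K)) + / (L * (nu + L))) / 2 - / ((nu + K) * (nu + L))
                 = ((K - L) ^ 2 + nu * (K + L)) / (2 * K * L * (nu + K) * (nu + L)))
    by (field; repeat split; lra).
  assert (0 <= ((K - L) ^ 2 + nu * (K + L)) / (2 * K * L * (nu + K) * (nu + L))).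
  { apply Rdiv_le_0_compat.
    - apply Rplus_le_le_0_compat; [apply pow2_ge_0 | apply Rmult_le_pos; lra].
    - repeat apply Rmult_lt_0_compat; lra. }
  lra.
Qed.

Lemma bessel_coef_turan nu k l : 0 <= nu ->
  bessel_coef (nu + 1) k * bessel_coef (nu + 1) l
  <= (bessel_coef nu (S k) * bessel_coef nu l + bessel_coef nu k * bessel_coef nu (S l)) / 2.
Proof.
  intros Hnu. pose proof (pos_INR k). pose proof (pos_INR l).
  pose proof (bessel_coef_pos nu k ltac:(lra)). pose proof (bessel_coef_pos nu l ltac:(lra)).
  rewrite !bessel_coef_shift, !bessel_coef_succ by lra.
  pose proof (inv_mul_le_half_sum nu (INR k + 1) (INR l + 1) Hnu ltac:(lra) ltac:(lra)).
  set (p := bessel_coef nu k) in *. set (q := bessel_coef nu l) in *.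
  replace (nu + INR k + 1) with (nu + (INR k + 1)) by ring.
  replace (nu + INR l + 1) with (nu + (INR l + 1)) by ring.
  set (K := INR k + 1) in *. set (L := INR l + 1) in *.
  assert (HK : 0 < K) by (unfold K; lra). assert (HL : 0 < L) by (unfold L; lra).
  replace (p / (nu + K) * (q / (nu + L))) with (p * q * / ((nu + K) * (nu + L)))
    by (field; split; lra).
  replace ((p / (K * (nu + K)) * q + p * (q / (L * (nu + L)))) / 2)
    with (p * q * ((/ (K * (nu + K)) + / (L * (nu + L))) / 2)) by (field; repeat split; lra).
  apply Rmult_le_compat_l; [nra | assumption].
Qed.

Lemma bessel_coef_convolution_le nu n : 0 <= nu ->
  sum_f_R0 (fun k => bessel_coef (nu + 1) k * bessel_coef (nu + 1) (n - k)) n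
  <= sum_f_R0 (fun k => bessel_coef nu k * bessel_coef nu (S n - k)) (S n).
Proof.
  intros Hnu.
  set (h := fun k => bessel_coef nu k * bessel_coef nu (S n - k)).
  assert (Hh : forall k, 0 < h k)
    by (intros; apply Rmult_lt_0_compat; apply bessel_coef_pos; lra).
  apply Rle_trans with (sum_f_R0 (fun k => (h (S k) + h k) / 2) n).
  { apply sum_Rle. intros k Hk. unfold h.
    replace (S n - S k)%nat with (n - k)%nat by lia.
    replace (S n - k)%nat with (S (n - k)) by lia.
    now apply bessel_coef_turan. }
  unfold Rdiv. rewrite <- scal_sum, plus_sum.
  assert (Hfirst : sum_f_R0 h (S n) = h 0%nat + sum_f_R0 (fun i => h (S i)) n)
    by (rewrite decomp_sum by lia; reflexivity).
  assert (Hlast : sum_f_R0 h (S n) = sum_f_R0 h n + h (S n)) by reflexivity.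
  pose proof (Hh 0%nat). pose proof (Hh (S n)). lra.
Qed.

Lemma sum_f_R0_convolution_pow (c d : nat -> R) y n :
  sum_f_R0 (fun k => (c k * y ^ k) * (d (n - k)%nat * y ^ (n - k))) n
  = y ^ n * sum_f_R0 (fun k => c k * d (n - k)%nat) n.
Proof.
  rewrite scal_sum. apply sum_eq. intros k Hk.
  replace (y ^ n) with (y ^ k * y ^ (n - k)) by (rewrite <- pow_add; f_equal; lia).
  ring.
Qed.

Lemma bessel_series_sq_lt nu y : 0 <= nu -> 0 < y ->
  y * (bessel_series (nu + 1) y * bessel_series (nu + 1) y)
  < bessel_series nu y * bessel_series nu y.
Proof.
  intros Hnu Hy.
  (* The n-th Cauchy coefficient of [y S_(nu+1)^2] is at most the (n+1)-th one of
     [S_nu^2]; what is left over is the constant term of [S_nu^2]. *)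
  set (conv := fun mu n =>
          sum_f_R0 (fun k => bessel_term mu y k * bessel_term mu y (n - k)%nat) n).
  assert (Hconv : forall mu, -1 < mu ->
                   is_series (conv mu) (bessel_series mu y * bessel_series mu y)).
  { intros mu Hmu. apply is_series_mult_pos; try (apply Series_correct, ex_series_bessel; auto);
      intros; left; now apply bessel_term_pos. }
  assert (Hstep : forall n, 0 <= y * conv (nu + 1) n <= conv nu (S n)).
  { intros n. unfold conv, bessel_term. rewrite !sum_f_R0_convolution_pow.
    pose proof (bessel_coef_convolution_le nu n Hnu). pose proof (pow_lt y n Hy).
    assert (0 <= sum_f_R0 (fun k => bessel_coef (nu + 1) k * bessel_coef (nu + 1) (n - k)) n).
    { apply cond_pos_sum. intros; left; apply Rmult_lt_0_compat; apply bessel_coef_pos; lra. }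
    simpl (y ^ S n). rewrite Rmult_assoc. split.
    - apply Rmult_le_pos; [lra | apply Rmult_le_pos; lra].
    - apply Rmult_le_compat_l; [lra |]. apply Rmult_le_compat_l; lra. }
  assert (Hex : ex_series (conv nu)) by (eexists; apply Hconv; lra).
  assert (Htail : Series (fun n => y * conv (nu + 1) n) <= Series (fun n => conv nu (S n)))
    by (apply Series_le; [exact Hstep | apply (ex_series_incr_1 (conv nu)), Hex]).
  rewrite Series_scal_l, (is_series_unique _ _ (Hconv (nu + 1) ltac:(lra))) in Htail.
  rewrite <- (is_series_unique _ _ (Hconv nu ltac:(lra))), (Series_incr_1 _ Hex).
  assert (0 < conv nu 0%nat).
  { unfold conv. simpl. apply Rmult_lt_0_compat; apply bessel_term_pos; lra. }
  lra.
Qed.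

Lemma bessel_series_lt nu x : 0 <= nu -> 0 < x ->
  x * bessel_series (nu + 1) (x ^ 2) < bessel_series nu (x ^ 2).
Proof.
  intros Hnu Hx. assert (Hy : 0 < x ^ 2) by now apply pow_lt.
  pose proof (bessel_series_sq_lt nu (x ^ 2) Hnu Hy) as Hsq.
  pose proof (bessel_series_pos nu (x ^ 2) ltac:(lra) Hy).
  pose proof (bessel_series_pos (nu + 1) (x ^ 2) ltac:(lra) Hy).
  apply Rsqr_incrst_0; [unfold Rsqr; nra | nra | lra].
Qed.

Lemma BesselI_succ_lt nu z : 0 <= nu -> 0 < z -> BesselI (nu + 1) z < BesselI nu z.
Proof.
  intros Hnu Hz. rewrite !BesselI_bessel_series by lra.
  rewrite Rpower_plus, Rpower_1, Rmult_assoc by lra.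
  apply Rmult_lt_compat_l; [apply exp_pos | apply bessel_series_lt; lra].
Qed.

Theorem mainTheorem12 (alpha z : R) (halpha : -1 < alpha) (hz : 0 < z) :
  Rabs (BesselI alpha z - BesselI (alpha + 1) z)
    < (4 * alpha + 6) * (BesselI (alpha + 1) z / z).
Proof.
  pose proof (BesselI_rec alpha z halpha hz) as Hrec0.
  pose proof (BesselI_rec (alpha + 1) z ltac:(lra) hz) as Hrec1.
  pose proof (BesselI_succ_lt (alpha + 1) z ltac:(lra) hz) as Hlt1.
  pose proof (BesselI_succ_lt (alpha + 2) z ltac:(lra) hz) as Hlt2.
  pose proof (BesselI_pos (alpha + 2 + 1) z ltac:(lra) hz) as Hpos.
  replace (alpha + 1 + 2) with (alpha + 2 + 1) in Hrec1 by ring.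
  replace (alpha + 1 + 1) with (alpha + 2) in * by ring.
  set (B := BesselI (alpha + 1) z) in *. set (C := BesselI (alpha + 2) z) in *.
  set (T := B / z).
  assert (HT : 0 < T) by (apply Rdiv_lt_0_compat; [apply BesselI_pos |]; lra).
  assert (Hrec0' : BesselI alpha z = C + 2 * (alpha + 1) * T)
    by (rewrite Hrec0; unfold T; field; lra).
  assert (HCT : 2 * (alpha + 2) / z * C <= 2 * (alpha + 2) * T).
  { unfold T. replace (2 * (alpha + 2) * (B / z)) with (2 * (alpha + 2) / z * B) by (field; lra).
    apply Rmult_le_compat_l; [apply Rdiv_le_0_compat |]; lra. }
  assert (Hlower : B - C < 2 * (alpha + 2) * T) by lra.
  rewrite Hrec0'. apply Rabs_def1; nra.
Qed.
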